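(* Let $R$ be a commutative ring with identity, $\mathcal S$ an associative $R$-algebra with identity, $\mathcal M$ a $2$-torsion free bimodule over $\mathcal S$, $\delta$ a derivation on $\mathcal S$ and $f:\mathcal S\to\mathcal M$ a bimodule homomorphism over $\mathcal S$. If $D:\mathcal S\to\mathcal M$ is a Jordan $(\delta,f)$-derivation on $\mathcal M$, then $(D(xy)-D(x)y-f(x)\delta(y))(xy-yx)=0$ for all $x,y\in\mathcal S$.
   Context: A derivation on $\mathcal S$ is an additive map $\delta$ with $\delta(ab)=\delta(a)b+a\delta(b)$. An additive map $D:\mathcal S\to\mathcal M$ is a Jordan $(\delta,f)$-derivation if $D(x^2)=D(x)x+f(x)\delta(x)$ for all $x\in\mathcal S$. $\mathcal M$ is $2$-torsion free if $2m=0$ implies $m=0$. *)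

From HB Require Import structures.
From mathcomp Require Import all_boot all_order all_algebra.
Set Implicit Arguments. Unset Strict Implicit. Unset Printing Implicit Defensive.
Import GRing.Theory.
Local Open Scope ring_scope.

Definition is_bimodule (S : ringType) (M : zmodType)
  (la : S -> M -> M) (ra : M -> S -> M) : Prop :=
  (forall a m n, la a (m + n) = la a m + la a n) /\
      (forall a b m, la (a + b) m = la a m + la b m) /\
      (forall m a b, ra m (a + b) = ra m a + ra m b) /\
      (forall m n a, ra (m + n) a = ra m a + ra n a) /\
      (forall a b m, la (a * b) m = la a (la b m)) /\
      (forall m a b, ra m (a * b) = ra (ra m a) b) /\
      (forall a m b, ra (la a m) b = la a (ra m b)) /\
      (forall m, la 1 m = m) /\ (forall m, ra m 1 = m).

Definition two_torsion_free (M : zmodType) : Prop :=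
  forall m : M, m *+ 2 = 0 -> m = 0.

Definition additive_map (U V : zmodType) (g : U -> V) : Prop :=
  forall x y, g (x + y) = g x + g y.

Definition is_derivation (S : ringType) (d : S -> S) : Prop :=
  additive_map d /\ forall a b, d (a * b) = d a * b + a * d b.

Definition is_bimodule_hom (S : ringType) (M : zmodType)
  (la : S -> M -> M) (ra : M -> S -> M) (f : S -> M) : Prop :=
  [/\ additive_map f, (forall a x, f (a * x) = la a (f x))
    & (forall x a, f (x * a) = ra (f x) a)].

Definition is_jordan_der (S : ringType) (M : zmodType)
  (ra : M -> S -> M) (d : S -> S) (f D : S -> M) : Prop :=
  additive_map D /\ forall x, D (x * x) = ra (D x) x + ra (f x) (d x).

From HB Require Import structures.
From mathcomp Require Import all_boot all_order all_algebra.
Set Implicit Arguments. Unset Strict Implicit. Unset Printing Implicit Defensive.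
Import GRing.Theory.
Local Open Scope ring_scope.

(* Write D(xy) = D(x)y + f(x)d(y) + E(x,y).  The defect E is biadditive and,
   by the Jordan identity, vanishes on the diagonal, so it is alternating.
   Because d is a derivation and f(uv) = f(u)v, it is moreover a cocycle:
   E(u,vw) = E(u,v)w + E(uv,w).  Expanding E(a, ab + ba) + E(ab + ba, a) = 0
   with the cocycle identity leaves 2 E(a,ba) = 0, so E(a,ba) = 0 in the
   2-torsion free M.  Finally, applying the cocycle identity to y(yx) and to
   x(xy), E(x,y)yx = -E(xy,yx) = E(yx,xy) = E(x,y)xy. *)

Section AdditiveMap.
Variables (U V : zmodType) (g : U -> V).
Hypothesis gD : additive_map g.

Lemma additive_map0 : g 0 = 0.
Proof. by apply: (addrI (g 0)); rewrite -gD !addr0. Qed.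

Lemma additive_mapN x : g (- x) = - g x.
Proof. by apply: (addrI (g x)); rewrite -gD !subrr additive_map0. Qed.

Lemma additive_mapB x y : g (x - y) = g x - g y.
Proof. by rewrite gD additive_mapN. Qed.

End AdditiveMap.

Section AlternatingCocycle.
Variables (S : pzRingType) (M : zmodType) (ra : M -> S -> M) (E : S -> S -> M).
Local Notation "m <* a" := (ra m a) (at level 40, left associativity).
Hypotheses (raDl : forall a, additive_map (ra^~ a))
           (raDr : forall m, additive_map (ra m)).
Hypotheses (EDl : forall b, additive_map (E^~ b)) (EDr : forall a, additive_map (E a)).
Let ra0l a : 0 <* a = 0 := additive_map0 (raDl a).
Let raNl m a : (- m) <* a = - (m <* a) := additive_mapN (raDl a) m.
Let raBr m a b : m <* (a - b) = m <* a - m <* b := additive_mapB (raDr m) a b.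

Hypothesis E_alt : forall a, E a a = 0.
Hypothesis E_cocycle : forall u v w, E u (v * w) = E u v <* w + E (u * v) w.

Lemma alternating_skew a b : E b a = - E a b.
Proof.
have := E_alt (a + b); rewrite EDl !EDr !E_alt add0r addr0 => /eqP.
by rewrite addrC addr_eq0 => /eqP.
Qed.

Lemma cocycle_mull u v w : E (u * v) w = E u (v * w) - E u v <* w.
Proof. by rewrite E_cocycle addrC addKr. Qed.

Hypothesis M2tf : two_torsion_free M.

Lemma alt_cocycle_mulr_eq0 a b : E a (b * a) = 0.
Proof.
apply: M2tf; set X := E a (b * a); set Z := E (a * a) b.
have E_a_ab : E a (a * b) = Z by rewrite E_cocycle E_alt ra0l add0r.
have E_ab_ba_a : E (a * b) a + E (b * a) a = X - Z.
  rewrite !cocycle_mull (alternating_skew a b) (alternating_skew (a * a) b) raNl.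
  by rewrite opprK addrACA addNr addr0.
have := alternating_skew a (a * b + b * a); rewrite EDl E_ab_ba_a EDr E_a_ab => skew.
by rewrite mulr2n -{1}(subrK Z X) -addrA skew addNr.
Qed.

Lemma alt_cocycle_commutator x y : E x y <* (x * y - y * x) = 0.
Proof.
have act_yx : E x y <* (y * x) = E (y * x) (x * y).
  apply/eqP; rewrite (alternating_skew (x * y)) -addr_eq0 -E_cocycle mulrA.
  by rewrite alt_cocycle_mulr_eq0.
have act_xy : E (y * x) (x * y) = E x y <* (x * y).
  by rewrite cocycle_mull mulrA alt_cocycle_mulr_eq0 (alternating_skew x) raNl sub0r opprK.
by rewrite raBr act_yx act_xy subrr.
Qed.

End AlternatingCocycle.

Section JordanDefect.
Variables (S : pzRingType) (M : zmodType) (ra : M -> S -> M).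
Variables (d : S -> S) (f D : S -> M).
Local Notation "m <* a" := (ra m a) (at level 40, left associativity).
Hypotheses (raDl : forall a, additive_map (ra^~ a))
           (raDr : forall m, additive_map (ra m))
           (raA : forall m a b, m <* (a * b) = m <* a <* b).
Hypotheses (dD : additive_map d) (dM : forall a b, d (a * b) = d a * b + a * d b).
Hypotheses (fD : additive_map f) (fR : forall x a, f (x * a) = f x <* a).
Hypothesis DD : additive_map D.
Hypothesis DJ : forall x, D (x * x) = D x <* x + f x <* d x.

Let raBl m n a : (m - n) <* a = m <* a - n <* a := additive_mapB (raDl a) m n.

Definition jordan_defect a b := D (a * b) - D a <* b - f a <* d b.

Lemma jordan_defectDl b : additive_map (jordan_defect^~ b).
Proof.
move=> a a'; rewrite /jordan_defect mulrDl !DD fD !raDl !opprD.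
by rewrite (addrACA (D (a * b))) (addrACA (D (a * b) - _)).
Qed.

Lemma jordan_defectDr a : additive_map (jordan_defect a).
Proof.
move=> b b'; rewrite /jordan_defect mulrDr !DD dD !raDr !opprD.
by rewrite (addrACA (D (a * b))) (addrACA (D (a * b) - _)).
Qed.

Lemma jordan_defect_diag a : jordan_defect a a = 0.
Proof. by rewrite /jordan_defect DJ -addrA -opprD subrr. Qed.

Lemma jordan_defect_cocycle u v w :
  jordan_defect u (v * w) = jordan_defect u v <* w + jordan_defect (u * v) w.
Proof.
rewrite /jordan_defect mulrA dM raDr fR !raA !raBl opprD addrA.
(* both sides are D(uvw) - D(u)vw - f(u)d(v)w - f(u)v d(w) *)
set P := D (u * v * w); set Q := D (u * v) <* w.
rewrite [in RHS]addrC -!addrA; congr (P + _).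
by rewrite [RHS]addrCA addKr [RHS]addrC -addrA.
Qed.
End JordanDefect.

Theorem lemma3p7 (R : comNzRingType) (S : algType R) (M : zmodType)
  (la : S -> M -> M) (ra : M -> S -> M) (d : S -> S) (f D : S -> M) :
  is_bimodule la ra ->
  two_torsion_free M ->
  is_derivation d ->
  is_bimodule_hom la ra f ->
  is_jordan_der ra d f D ->
  forall x y : S,
    ra (D (x * y) - ra (D x) y - ra (f x) (d y)) (x * y - y * x) = 0.
Proof.
move=> [_ [_ [raDr [raDm [_ [raA _]]]]]] M2tf [dD dM] [fD _ fR] [DD DJ].
have raDl a : additive_map (ra^~ a) by move=> m n; apply: raDm.
exact: (alt_cocycle_commutator raDl raDr (jordan_defectDl d raDl fD DD)
  (jordan_defectDr f raDr dD DD) (jordan_defect_diag DJ)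
  (jordan_defect_cocycle D raDl raDr raA dM fR) M2tf).
Qed.
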